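(* Let $R$ be a commutative ring and let $M$ be a GV-torsionfree $w$-projective $R$-module. Then $M$ is $w$-split if and only if there is $J\in\mathrm{GV}(R)$ with $JM_w\subseteq M$.
   Context: $R$ is a commutative ring with identity. For an $R$-module $M$ and $s\in R$, $\eta^M_s:M\to M$ is multiplication by $s$. GV-ideals and torsion: - An ideal $J$ of $R$ is a GV-ideal if $J$ is finitely generated and the natural map $R\to\mathrm{Hom}_R(J,R)$ is an isomorphism. $\mathrm{GV}(R)$ is the set of GV-ideals. - $\mathrm{tor_{GV}}(M)=\{x\in M: Jx=0\text{ for some }J\in\mathrm{GV}(R)\}$. - $M$ is GV-torsion if $\mathrm{tor_{GV}}(M)=M$, and GV-torsionfree if $\mathrm{tor_{GV}}(M)=0$. $w$-modules and $w$-projectivity: - A GV-torsionfree $M$ is a $w$-module if $\mathrm{Ext}^1_R(R/J,M)=0$ for all $J\in\mathrm{GV}(R)$. - For GV-torsionfree $M$, $M_w=\{x\in E(M): Jx\subseteq M\text{ for some }J\in\mathrm{GV}(R)\}$, where $E(M)$ is the injective envelope. - $M$ is $w$-projective if $\mathrm{Ext}^1_R(L(M),N)$ is GV-torsion for every torsionfree $w$-module $N$, where $L(M)=(M/\mathrm{tor_{GV}}(M))_w$. $w$-split: - A short exact sequence $0\to A\xrightarrow{f}B\xrightarrow{g}C\to 0$ is $w$-split if there exist $J=\langle d_1,\dots,d_n\rangle\in\mathrm{GV}(R)$ and $h_1,\dots,h_n\in\mathrm{Hom}_R(C,B)$ with $gh_k=\eta^C_{d_k}$ for all $k$. - $M$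 is $w$-split if there is a $w$-split exact sequence $0\to K\to P\to M\to 0$ with $P$ projective. *)

From HB Require Import structures.
From mathcomp Require Import all_boot all_order all_algebra.
Set Implicit Arguments. Unset Strict Implicit. Unset Printing Implicit Defensive.
Import GRing.Theory.
Local Open Scope ring_scope.

Section GVDefs.
Variable R : comPzRingType.

Definition ideal_gen (ds : seq R) (x : R) : Prop :=
  exists c : 'I_(size ds) -> R, x = \sum_(i < size ds) c i * ds`_i.

(* J = <ds> is a GV-ideal: the natural map R -> Hom_R(J,R), r |-> (x |-> r x),
   is injective and surjective. *)
Definition GV (ds : seq R) : Prop :=
  (forall r : R, (forall x, ideal_gen ds x -> r * x = 0) -> r = 0) /\
  (forall f : R -> R,
      (forall x y, ideal_gen ds x -> ideal_gen ds y -> f (x + y) = f x + f y) ->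
      (forall a x, ideal_gen ds x -> f (a * x) = a * f x) ->
      exists r : R, forall x, ideal_gen ds x -> f x = r * x).

Definition tor_GV (M : lmodType R) (x : M) : Prop :=
  exists ds, GV ds /\ forall a, ideal_gen ds a -> a *: x = 0.

Definition GV_torsion (M : lmodType R) : Prop := forall x : M, tor_GV x.
Definition GV_torsionfree (M : lmodType R) : Prop :=
  forall x : M, tor_GV x -> x = 0.

Definition submodule (E : lmodType R) (N : E -> Prop) : Prop :=
  N 0 /\ (forall x y, N x -> N y -> N (x + y)) /\ (forall a x, N x -> N (a *: x)).

Definition injective_module (E : lmodType R) : Prop :=
  forall (A B : lmodType R) (f : {linear A -> B}) (g : {linear A -> E}),
    injective f -> exists h : {linear B -> E}, forall a, h (f a) = g a.

Definition projective_module (P : lmodType R) : Prop :=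
  forall (A B : lmodType R) (g : {linear A -> B}) (f : {linear P -> B}),
    (forall b, exists a, g a = b) -> exists h : {linear P -> A}, forall p, g (h p) = f p.

Definition injective_envelope (M E : lmodType R) (iota : {linear M -> E}) : Prop :=
  injective iota /\ injective_module E /\
  (forall N : E -> Prop, submodule N -> (exists x, N x /\ x <> 0) ->
     exists m, N (iota m) /\ iota m <> 0).

Definition Mw (M E : lmodType R) (iota : {linear M -> E}) (x : E) : Prop :=
  exists ds, GV ds /\ forall a, ideal_gen ds a -> exists m, a *: x = iota m.

Definition short_exact (A B C : lmodType R) (f : {linear A -> B}) (g : {linear B -> C})
  : Prop :=
  injective f /\ (forall c, exists b, g b = c) /\
  (forall b, g b = 0 <-> exists a, f a = b).

Definition Ext1_zero (C A : lmodType R) : Prop :=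
  forall (B : lmodType R) (f : {linear A -> B}) (g : {linear B -> C}),
    short_exact f g -> exists h : {linear C -> B}, forall c, g (h c) = c.

(* Ext^1_R(C, A) is GV-torsion: every Yoneda extension class xi is annihilated
   by some GV-ideal J = <d_1..d_n>; d * xi = xi . eta_d is zero iff eta_d lifts
   through g. *)
Definition Ext1_GV_torsion (C A : lmodType R) : Prop :=
  forall (B : lmodType R) (f : {linear A -> B}) (g : {linear B -> C}),
    short_exact f g ->
    exists ds, GV ds /\ forall i : 'I_(size ds),
      exists h : {linear C -> B}, forall c, g (h c) = ds`_i *: c.

(* w-module: GV-torsionfree and Ext^1(R/J, N) = 0 for all GV-ideals J;
   R/J is represented by any module Q with a surjection R -> Q of kernel J. *)
Definition w_module (N : lmodType R) : Prop :=
  GV_torsionfree N /\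
  forall ds, GV ds ->
    forall (Q : lmodType R) (pi : {linear R^o -> Q}),
      (forall q, exists r, pi r = q) -> (forall r, pi r = 0 <-> ideal_gen ds r) ->
      Ext1_zero Q N.

(* Since tor_GV(M) = 0, L(M) = (M/tor_GV(M))_w = M_w; L(M) is represented by any
   module L with a monomorphism L -> E whose image is exactly M_w. *)
Definition w_projective (M E : lmodType R) (iota : {linear M -> E}) : Prop :=
  forall (L : lmodType R) (phi : {linear L -> E}),
    injective phi -> (forall y, Mw iota y <-> exists l, phi l = y) ->
    forall N : lmodType R, GV_torsionfree N -> w_module N -> Ext1_GV_torsion L N.

Definition w_split_seq (A B C : lmodType R) (f : {linear A -> B}) (g : {linear B -> C})
  : Prop :=
  short_exact f g /\
  exists ds, GV ds /\ forall i : 'I_(size ds),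
    exists h : {linear C -> B}, forall c, g (h c) = ds`_i *: c.

Definition w_split (M : lmodType R) : Prop :=
  exists (K P : lmodType R) (f : {linear K -> P}) (g : {linear P -> M}),
    projective_module P /\ w_split_seq f g.

End GVDefs.

(* Call V GV-extendable when, for every GV-ideal J, each R-linear map J -> V is
   multiplication by an element of V, i.e. Hom(R,V) -> Hom(J,V) is onto; for a
   GV-torsionfree V this says Ext^1(R/J,V) = 0, so GV-torsionfree GV-extendable
   modules are w-modules.  Free modules are GV-extendable coordinatewise, since
   J is a GV-ideal; hence so are projective modules (retracts of free ones) and
   kernels of maps from a free module to a GV-torsionfree module.

   If M is w-split by maps h_i : M -> P with g h_i = d_i, and J'x lies in M for
   some x in M_w, then a |-> h_i(a x) is a map J' -> P, hence multiplication by
   some p, and d_i x - g(p) is killed by J'; as E(M) is GV-torsionfree, d_i x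
   = g(p) lies in M.  Conversely, write M_w = F/N with F free.  Then N is a
   w-module, so w-projectivity provides a GV-ideal J' and lifts M_w -> F of
   multiplication by each generator d of J'.  Following such a lift by
   multiplication by a generator e of J, which maps M_w into M, and lifting
   through the free module on M gives splitting maps for the GV-ideal JJ'. *)

From HB Require Import structures.
From mathcomp Require Import all_boot all_order all_algebra.
From mathcomp Require Import finmap.
From mathcomp.multinomials Require Import monalg.
From Stdlib Require Import ClassicalEpsilon.
Set Implicit Arguments. Unset Strict Implicit. Unset Printing Implicit Defensive.
Import GRing.Theory.
Local Open Scope ring_scope.

Lemma choice_on (A B : Type) (b0 : B) (P : A -> Prop) (Q : A -> B -> Prop) :
  (forall a, P a -> exists b, Q a b) -> exists f : A -> B, forall a, P a -> Q a (f a).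
Proof.
move=> hQ; apply: (ClassicalEpsilon.choice (fun a b => P a -> Q a b)) => a.
case: (excluded_middle_informative (P a)) => [/hQ [b Qab] | nPa]; first by exists b.
by exists b0.
Qed.

Section IdealGen.
Variable R : comPzRingType.
Implicit Types (ds es : seq R) (a b r x y : R).

Lemma ideal_gen0 ds : ideal_gen ds 0.
Proof. by exists (fun=> 0); rewrite big1 // => i _; rewrite mul0r. Qed.

Lemma ideal_genD ds x y : ideal_gen ds x -> ideal_gen ds y -> ideal_gen ds (x + y).
Proof.
move=> [c ->] [c' ->]; exists (fun i => c i + c' i).
by rewrite -big_split; apply: eq_bigr => i _; rewrite mulrDl.
Qed.

Lemma ideal_genMl ds r x : ideal_gen ds x -> ideal_gen ds (r * x).
Proof.
move=> [c ->]; exists (fun i => r * c i).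
by rewrite mulr_sumr; apply: eq_bigr => i _; rewrite mulrA.
Qed.

Lemma ideal_gen_nth ds (i : 'I_(size ds)) : ideal_gen ds ds`_i.
Proof.
exists (fun j => (j == i)%:R); rewrite (bigD1 i) //= eqxx mul1r big1 ?addr0 //.
by move=> j /negbTE ->; rewrite mul0r.
Qed.

Lemma ideal_gen_mem ds x : x \in ds -> ideal_gen ds x.
Proof.
move=> xds; have ix : (index x ds < size ds)%N by rewrite index_mem.
by have := ideal_gen_nth (Ordinal ix); rewrite /= nth_index.
Qed.

Lemma ideal_gen_ind ds (P : R -> Prop) :
  P 0 -> (forall x y, P x -> P y -> P (x + y)) -> (forall r x, P x -> P (r * x)) ->
  (forall i : 'I_(size ds), P ds`_i) -> forall x, ideal_gen ds x -> P x.
Proof. by move=> P0 PD PM Pgen x [c ->]; elim/big_ind: _ => // i _; apply: PM. Qed.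

Definition ideal_linear (V : lmodType R) ds (phi : R -> V) : Prop :=
  (forall x y, ideal_gen ds x -> ideal_gen ds y -> phi (x + y) = phi x + phi y) /\
  (forall a x, ideal_gen ds x -> phi (a * x) = a *: phi x).

Lemma ideal_linear_eq (V : lmodType R) ds (phi psi : R -> V) :
  ideal_linear ds phi -> ideal_linear ds psi ->
  (forall i : 'I_(size ds), phi ds`_i = psi ds`_i) ->
  forall x, ideal_gen ds x -> phi x = psi x.
Proof.
move=> [phiD phiM] [psiD psiM] eq_gen x Jx.
suff [] : ideal_gen ds x /\ phi x = psi x by [].
move: x Jx; apply: ideal_gen_ind.
- have J0 := ideal_gen0 ds.
  by split; rewrite // -[0](mul0r 0) phiM // psiM // !scale0r.
- by move=> x y [Jx ex] [Jy ey]; split; [apply: ideal_genD | rewrite phiD // psiD // ex ey].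
- by move=> r x [Jx ex]; split; [apply: ideal_genMl | rewrite phiM // psiM // ex].
- by move=> i; split; [apply: ideal_gen_nth | apply: eq_gen].
Qed.

Definition GV_extendable (V : lmodType R) : Prop :=
  forall ds, GV ds -> forall phi : R -> V, ideal_linear ds phi ->
    exists v, forall a, ideal_gen ds a -> phi a = a *: v.

Lemma GV_eq ds r s : GV ds -> (forall x, ideal_gen ds x -> r * x = s * x) -> r = s.
Proof.
move=> [GVann _] eq_rs; apply/eqP; rewrite -subr_eq0; apply/eqP/GVann => x Jx.
by rewrite mulrBl eq_rs // subrr.
Qed.

Lemma GV_one : GV [:: 1 : R].
Proof.
have J1 : ideal_gen [:: 1 : R] 1 by apply: ideal_gen_mem; rewrite inE.
split=> [r r_ann | f _ fM]; first by rewrite -[r]mulr1 r_ann.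
by exists (f 1) => x _; rewrite -[x]mulr1 fM // mulr1 mulrC.
Qed.

Definition ideal_prod (es ds : seq R) : seq R := [seq x * y | x <- es, y <- ds].

Lemma ideal_gen_prod es ds x y :
  ideal_gen es x -> ideal_gen ds y -> ideal_gen (ideal_prod es ds) (x * y).
Proof.
move=> Jx Jy; move: x Jx; apply: ideal_gen_ind.
- by rewrite mul0r; apply: ideal_gen0.
- by move=> a b Ja Jb; rewrite mulrDl; apply: ideal_genD.
- by move=> r a Ja; rewrite -mulrA; apply: ideal_genMl.
move=> i; move: y Jy; apply: ideal_gen_ind.
- by rewrite mulr0; apply: ideal_gen0.
- by move=> a b Ja Jb; rewrite mulrDr; apply: ideal_genD.
- by move=> r a Ja; rewrite mulrCA; apply: ideal_genMl.
by move=> j; apply/ideal_gen_mem/allpairs_f; apply: mem_nth.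
Qed.

Lemma nth_ideal_prod es ds (k : 'I_(size (ideal_prod es ds))) :
  exists (i : 'I_(size es)) (j : 'I_(size ds)), (ideal_prod es ds)`_k = es`_i * ds`_j.
Proof.
have /allpairsP [[x y] /= [xes yds ->]] := mem_nth 0 (ltn_ord k).
have ix : (index x es < size es)%N by rewrite index_mem.
have iy : (index y ds < size ds)%N by rewrite index_mem.
by exists (Ordinal ix), (Ordinal iy); rewrite /= !nth_index.
Qed.

Lemma GV_prod es ds : GV es -> GV ds -> GV (ideal_prod es ds).
Proof.
move=> GVe GVd; split=> [r r_ann | f fD fM].
  apply: GVe.1 => a Ja; apply: GVd.1 => b Jb.
  by rewrite -mulrA; apply/r_ann/ideal_gen_prod.
have [G fG] : exists G : R -> R,
    forall a, ideal_gen es a -> forall b, ideal_gen ds b -> f (a * b) = G a * b.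
  apply: (choice_on 0 (Q := fun a g => forall b, ideal_gen ds b -> f (a * b) = g * b)).
  move=> a Ja; apply: GVd.2 => [x y Jx Jy | c x Jx].
    by rewrite mulrDr fD //; apply: ideal_gen_prod.
  by rewrite mulrCA (fM c (a * x)) //; apply: ideal_gen_prod.
have [r Gr] : exists r, forall a, ideal_gen es a -> G a = r * a.
  apply: GVe.2 => [x y Jx Jy | c x Jx]; apply: (GV_eq GVd) => b Jb.
    have Jxy := ideal_genD Jx Jy.
    rewrite -fG // mulrDl fD; try exact: ideal_gen_prod.
    by rewrite !fG // mulrDl.
  have Jcx := ideal_genMl c Jx.
  rewrite -fG // -mulrA fM; last exact: ideal_gen_prod.
  by rewrite fG // mulrA.
exists r; apply: (ideal_linear_eq (V := R^o)) => //.
- by split=> [x y _ _ | c x _]; [rewrite mulrDr | rewrite mulrCA].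
move=> k; have [i [j ->]] := nth_ideal_prod k.
by rewrite fG ?Gr ?mulrA //; apply: ideal_gen_nth.
Qed.

End IdealGen.

Section LinearMap.
Variables (R : pzRingType) (A B : lmodType R).

Definition linear_map (h : A -> B) (h_lin : linear h) : {linear A -> B} :=
  HB.pack_for {linear A -> B} h (GRing.isLinear.Build R A B *:%R h h_lin).

End LinearMap.

Section Submodule.
Variables (R : comPzRingType) (V : lmodType R) (N : V -> Prop) (HN : submodule N).

(* [HN] is mentioned so that [submod_pred], hence [submod], depends on it: the
   instances below need the closure proof. *)
Definition submod_pred : pred V :=
  fun x => let _ := HN in if excluded_middle_informative (N x) then true else false.

Lemma submod_predP x : reflect (N x) (submod_pred x).
Proof. by rewrite /submod_pred; case: excluded_middle_informative => Nx; constructor. Qed.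

Lemma submod_pred_closed : submod_closed submod_pred.
Proof.
case: HN => [N0 [ND NZ]]; split; first exact/submod_predP.
move=> a x y /submod_predP Nx /submod_predP Ny; apply/submod_predP.
by apply: ND => //; apply: NZ.
Qed.

HB.instance Definition _ := GRing.isSubmodClosed.Build R V submod_pred submod_pred_closed.

Record submod := Submod { submod_val : V; _ : submod_pred submod_val }.
HB.instance Definition _ := [isSub for submod_val].
HB.instance Definition _ := [Choice of submod by <:].
HB.instance Definition _ := [SubChoice_isSubLmodule of submod by <:].

Definition submod_incl : {linear submod -> V} := val.

Definition submod_of x (Nx : N x) : submod := Submod (introT (submod_predP x) Nx).

Lemma submod_valP (y : submod) : N (val y).
Proof. exact/submod_predP/valP. Qed.

Lemma submod_inclP y : N y <-> exists z, submod_incl z = y.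
Proof.
split=> [Ny | [z <-]]; last exact: submod_valP.
by exists (submod_of Ny).
Qed.

End Submodule.

Section Kernel.
Variables (R : comPzRingType) (A B : lmodType R) (g : {linear A -> B}).

Lemma ker_submodule : submodule (fun x => g x = 0).
Proof.
split; first exact: linear0.
split=> [x y gx gy | a x gx]; first by rewrite linearD gx gy addr0.
by rewrite linearZ /= gx scaler0.
Qed.

Lemma ker_short_exact :
  (forall b, exists a, g a = b) -> short_exact (submod_incl ker_submodule) g.
Proof.
by move=> g_onto; split; [exact: val_inj | split=> // b; rewrite -submod_inclP].
Qed.

End Kernel.

Section FreeModule.
Variables (K : choiceType) (R : pzRingType).

(* monalg gives [malg K R] a module structure only over nontrivial rings; this
   copy gets one over any [pzRingType]. *)
Definition freemod := malg K R.
HB.instance Definition _ := GRing.Zmodule.on freemod.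

Definition freemod_scale c (g : freemod) : freemod :=
  \sum_(k <- msupp g) << c * g@_k *g k >>.

Lemma freemod_scaleE c g k : (freemod_scale c g)@_k = c * g@_k.
Proof.
rewrite {2}[g]monalgE !raddf_sum mulr_sumr.
by apply/eq_bigr=> /= i _; rewrite !mcoeffU mulrnAr.
Qed.

Lemma freemod_scaleA c1 c2 g :
  freemod_scale c1 (freemod_scale c2 g) = freemod_scale (c1 * c2) g.
Proof. by apply/malgP=> k; rewrite !freemod_scaleE mulrA. Qed.

Lemma freemod_scale1 g : freemod_scale 1 g = g.
Proof. by apply/malgP=> k; rewrite freemod_scaleE mul1r. Qed.

Lemma freemod_scaleDr c g1 g2 :
  freemod_scale c (g1 + g2) = freemod_scale c g1 + freemod_scale c g2.
Proof. by apply/malgP=> k; rewrite !(mcoeffD, freemod_scaleE) mulrDr. Qed.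

Lemma freemod_scaleDl g c1 c2 :
  freemod_scale (c1 + c2) g = freemod_scale c1 g + freemod_scale c2 g.
Proof. by apply/malgP=> k; rewrite !(mcoeffD, freemod_scaleE) mulrDl. Qed.

HB.instance Definition _ := GRing.Zmodule_isLmodule.Build R freemod
  freemod_scaleA freemod_scale1 freemod_scaleDr freemod_scaleDl.

Lemma freemod_coefZ c (g : freemod) k : (c *: g)@_k = c * g@_k.
Proof. exact: freemod_scaleE. Qed.

Definition fbasis k : freemod := << 1 *g k >>.

End FreeModule.

Section FreeLift.
Variables (R : pzRingType) (K : choiceType) (V : lmodType R) (u : K -> V).

Definition flift (g : freemod K R) : V := \sum_(k <- msupp g) g@_k *: u k.

Lemma flift_supp (g : freemod K R) (D : {fset K}) :
  (msupp g `<=` D)%fset -> flift g = \sum_(k <- D) g@_k *: u k.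
Proof.
move=> sub; apply: big_fset_incl => // k _ kg.
by rewrite mcoeff_outdom // scale0r.
Qed.

Lemma flift_is_linear : linear flift.
Proof.
move=> c g1 g2; pose D := (msupp g1 `|` msupp g2 `|` msupp (c *: g1 + g2))%fset.
rewrite (@flift_supp _ D) ?fsubsetUr // (@flift_supp g1 D); last first.
  by apply: fsubset_trans (fsubsetUl _ _); apply: fsubsetUl.
rewrite (@flift_supp g2 D); last first.
  by apply: fsubset_trans (fsubsetUl _ _); apply: fsubsetUr.
rewrite scaler_sumr -big_split /=; apply: eq_bigr => k _.
by rewrite mcoeffD freemod_coefZ scalerDl scalerA.
Qed.

HB.instance Definition _ :=
  GRing.isLinear.Build R (freemod K R) V *:%R flift flift_is_linear.

Lemma flift_fbasis k : flift (fbasis R k) = u k.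
Proof.
rewrite (@flift_supp _ [fset k]%fset) ?msuppU_le //.
by rewrite big_seq_fset1 mcoeffUU scale1r.
Qed.

End FreeLift.

Section FreeLiftComm.
Variables (R : comPzRingType) (K : choiceType).

Lemma flift_comp (V W : lmodType R) (l : {linear V -> W}) (u : K -> V) g :
  l (flift u g) = flift (l \o u) g.
Proof. by rewrite linear_sum; apply: eq_bigr => k _; rewrite linearZ. Qed.

Lemma eq_flift (V : lmodType R) (u u' : K -> V) : u =1 u' -> flift u =1 flift u'.
Proof. by move=> eq_u g; apply: eq_bigr => k _; rewrite eq_u. Qed.

Lemma flift_scale (V : lmodType R) c (u : K -> V) g :
  flift (fun k => c *: u k) g = c *: flift u g.
Proof. by rewrite scaler_sumr; apply: eq_bigr => k _; rewrite !scalerA mulrC. Qed.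

Lemma flift_idfun_onto (V : lmodType R) (v : V) :
  exists g : freemod V R, flift idfun g = v.
Proof. by exists (fbasis R v); rewrite flift_fbasis. Qed.

Lemma flift_fbasis_id (g : freemod K R) : flift (fbasis R) g = g.
Proof.
rewrite [RHS]monalgE; apply: eq_bigr => k _; apply/malgP => k'.
by rewrite freemod_coefZ !mcoeffU; case: eqP; rewrite ?mulr1 ?mulr0.
Qed.

Lemma freemod_projective : projective_module (freemod K R).
Proof.
move=> A B g f g_onto.
have [a ga] :=
  ClassicalEpsilon.choice (fun k a => g a = f (fbasis R k)) (fun k => g_onto _).
exists (flift a) => p /=.
by rewrite flift_comp (eq_flift ga) -(flift_comp f) flift_fbasis_id.
Qed.

Lemma freemod_GV_torsionfree : GV_torsionfree (freemod K R).
Proof.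
move=> x [ds [GVd Jx]]; apply/malgP => k; rewrite mcoeff0.
by apply: GVd.1 => a Ja; rewrite mulrC -freemod_coefZ Jx // mcoeff0.
Qed.

Lemma freemod_GV_extendable : GV_extendable (freemod K R).
Proof.
move=> ds GVd phi [phiD phiM].
have coef_lin k : ideal_linear ds (fun a => (phi a)@_k : R^o).
  by split=> [x y Jx Jy | c x Jx]; rewrite (phiD, phiM) // (mcoeffD, freemod_coefZ).
have [r phir] : exists r : K -> R, forall k a, ideal_gen ds a -> (phi a)@_k = r k * a.
  apply: (ClassicalEpsilon.choice
    (fun k rk => forall a, ideal_gen ds a -> (phi a)@_k = rk * a)) => k.
  by apply: GVd.2; case: (coef_lin k).
pose S := (\bigcup_(d <- ds) msupp (phi d))%fset.
have r_out k : k \notin S -> r k = 0.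
  move=> kS; apply: GVd.1 => a Ja; rewrite -phir //.
  apply: (ideal_linear_eq (coef_lin k) (psi := fun=> 0 : R^o)) Ja.
    by split=> *; rewrite ?addr0 ?scaler0.
  move=> i; apply: mcoeff_outdom; apply: contra kS => k_i.
  by apply/bigfcupP; exists ds`_i; rewrite ?mem_nth.
exists [malg k in S => r k] => a Ja; apply/malgP => k.
rewrite freemod_coefZ mcoeffE phir //.
by case: ifPn => [_ | /r_out ->]; rewrite ?mulr0 ?mul0r // mulrC.
Qed.

End FreeLiftComm.

Section GVTorsionfree.
Variable R : comPzRingType.

Lemma GV_torsionfree_inj (L V : lmodType R) (phi : {linear L -> V}) :
  injective phi -> GV_torsionfree V -> GV_torsionfree L.
Proof.
move=> phi_inj Vtf x [ds [GVd Jx]]; apply: phi_inj; rewrite linear0; apply: Vtf.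
by exists ds; split=> // a Ja; rewrite -linearZ Jx // linear0.
Qed.

Lemma envelope_GV_torsionfree (M E : lmodType R) (iota : {linear M -> E}) :
  injective_envelope iota -> GV_torsionfree M -> GV_torsionfree E.
Proof.
move=> [iota_inj [_ essential]] Mtf x [ds [GVd Jx]].
case: (eqVneq x 0) => // x_neq0; exfalso.
have Rx_sub : submodule (fun y => exists r, y = r *: x).
  split; first by exists 0; rewrite scale0r.
  split=> [_ _ [a ->] [b ->] | c _ [a ->]]; first by exists (a + b); rewrite scalerDl.
  by exists (c * a); rewrite scalerA.
have [|m [[r rx] m_neq0]] := essential _ Rx_sub.
  by exists x; split; [exists 1; rewrite scale1r | apply/eqP].
apply: m_neq0; suff -> : m = 0 by rewrite linear0.
apply: Mtf; exists ds; split=> // a Ja; apply: iota_inj.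
by rewrite linearZ /= rx linear0 scalerA mulrC -scalerA Jx // scaler0.
Qed.

Lemma projective_GV_extendable (P : lmodType R) :
  projective_module P -> GV_extendable P.
Proof.
move=> Pproj ds GVd phi [phiD phiM].
have [s sK] := Pproj _ _ (flift idfun) idfun (@flift_idfun_onto _ _).
have [|v phiv] := freemod_GV_extendable GVd (phi := s \o phi).
  by split=> [x y Jx Jy | c x Jx] /=; rewrite (phiD, phiM) // (linearD, linearZ).
by exists (flift idfun v) => a Ja; rewrite -[LHS]sK -linearZ -phiv.
Qed.

Lemma ker_GV_extendable (F L : lmodType R) (g : {linear F -> L}) :
  GV_extendable F -> GV_torsionfree L -> GV_extendable (submod (ker_submodule g)).
Proof.
move=> Fext Ltf ds GVd phi [phiD phiM].
have [|v phiv] := Fext ds GVd (submod_incl _ \o phi).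
  by split=> [x y Jx Jy | c x Jx] /=; rewrite (phiD, phiM) // (linearD, linearZ).
have gv : g v = 0.
  apply: Ltf; exists ds; split=> // a Ja.
  by rewrite -linearZ -phiv //; exact: (submod_valP (phi a)).
by exists (submod_of (ker_submodule g) gv) => a Ja; apply: val_inj; rewrite [LHS]phiv.
Qed.

Lemma ideal_lift (A B : lmodType R) (f : {linear A -> B}) ds b :
  injective f -> (forall a, ideal_gen ds a -> exists n, f n = a *: b) ->
  exists n : R -> A, ideal_linear ds n /\ forall a, ideal_gen ds a -> f (n a) = a *: b.
Proof.
move=> f_inj Jb; have [n fn] := choice_on 0 Jb.
exists n; split=> //; split=> [x y Jx Jy | c x Jx]; apply: f_inj.
  have Jxy := ideal_genD Jx Jy.
  by rewrite linearD !fn // scalerDl.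
have Jcx := ideal_genMl c Jx.
by rewrite linearZZ !fn // scalerA.
Qed.

Lemma GV_extendable_w_module (N : lmodType R) :
  GV_torsionfree N -> GV_extendable N -> w_module N.
Proof.
move=> Ntf Next; split=> // ds GVd Q pi pi_onto pi_ker B f g [f_inj [g_onto g_ker]].
have piM c x : pi (c * x) = c *: pi x by exact: (linearZZ pi c (x : R^o)).
have [b gb] := g_onto (pi 1).
have [|n [n_lin fn]] := ideal_lift (ds := ds) (b := b) f_inj.
  by move=> a Ja; apply/g_ker; rewrite linearZ /= gb -piM mulr1; apply/pi_ker.
have [v nv] := Next ds GVd n n_lin.
(* Correcting the lift [b] of [pi 1] by [f v] makes it killed by the ideal,
   so that [q |-> r q *: b0] is a well-defined section of [g]. *)
pose b0 := b - f v.
have Jb0 a : ideal_gen ds a -> a *: b0 = 0.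
  by move=> Ja; rewrite scalerBr -linearZ -nv // fn // subrr.
have [r pir] := ClassicalEpsilon.choice (fun q r => pi r = q) pi_onto.
have s_lin : linear (fun q => r q *: b0).
  move=> c q q'; apply/eqP; rewrite scalerA -scalerDl -subr_eq0 -scalerBl Jb0 //.
  by apply/pi_ker; rewrite linearB linearD /= piM !pir subrr.
have gfv : g (f v) = 0 by apply/g_ker; exists v.
by exists (linear_map s_lin) => q /=; rewrite linearZ linearB /= gfv subr0 gb -piM mulr1.
Qed.

End GVTorsionfree.

Section Mw.
Variables (R : comPzRingType) (M E : lmodType R) (iota : {linear M -> E}).

Lemma ideal_scale_in_image ds x :
  (forall i : 'I_(size ds), exists m, ds`_i *: x = iota m) ->
  forall a, ideal_gen ds a -> exists m, a *: x = iota m.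
Proof.
move=> gen_img; apply: ideal_gen_ind => //.
- by exists 0; rewrite scale0r linear0.
- by move=> a b [m1 e1] [m2 e2]; exists (m1 + m2); rewrite scalerDl e1 e2 linearD.
- by move=> r a [m e]; exists (r *: m); rewrite -scalerA e linearZ.
Qed.

Lemma Mw_iota m : Mw iota (iota m).
Proof.
by exists [:: 1]; split=> [|a _]; [exact: GV_one | exists (a *: m); rewrite linearZ].
Qed.

Lemma Mw_submodule : submodule (Mw iota).
Proof.
split; first by rewrite -(linear0 iota); apply: Mw_iota.
split=> [x y [es [GVe Jx]] [ds [GVd Jy]] | c x [ds [GVd Jx]]].
  exists (ideal_prod es ds); split; first exact: GV_prod.
  apply: ideal_scale_in_image => k; have [i [j ->]] := nth_ideal_prod k.
  have [m1 e1] := Jx _ (ideal_gen_nth i); have [m2 e2] := Jy _ (ideal_gen_nth j).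
  exists (ds`_j *: m1 + es`_i *: m2).
  by rewrite scalerDr linearD !linearZ /= -e1 -e2 !scalerA [ds`_j * _]mulrC.
exists ds; split=> // a Ja; have [m e] := Jx a Ja.
by exists (c *: m); rewrite scalerA mulrC -scalerA e linearZ.
Qed.

Definition Mw_of m : submod Mw_submodule := submod_of Mw_submodule (Mw_iota m).

Lemma Mw_of_is_linear : linear Mw_of.
Proof. by move=> c m m'; apply: val_inj; rewrite /= !linearP. Qed.

HB.instance Definition _ :=
  GRing.isLinear.Build R M (submod Mw_submodule) *:%R Mw_of Mw_of_is_linear.

Hypotheses (env : injective_envelope iota) (Mtf : GV_torsionfree M).

Lemma w_split_GV_scales_Mw_into_M : w_split M ->
  exists ds, GV ds /\
    forall x, Mw iota x -> forall a, ideal_gen ds a -> exists m, a *: x = iota m.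
Proof.
move=> [K [P [f [g [Pproj [_ [ds [GVd g_split]]]]]]]].
have Etf := envelope_GV_torsionfree env Mtf.
exists ds; split=> // x [es [GVe Jx]]; apply: ideal_scale_in_image => i.
have [h gh] := g_split i.
have [|n [n_lin iota_n]] := ideal_lift (ds := es) (b := x) env.1.
  by move=> a /Jx [m ->]; exists m.
have [|p hn] := projective_GV_extendable Pproj GVe (phi := h \o n).
  case: n_lin => nD nM.
  by split=> [a b Ja Jb | c a Ja] /=; rewrite (nD, nM) // (linearD, linearZ).
exists (g p); apply/eqP; rewrite -subr_eq0; apply/eqP/Etf; exists es; split=> // a Ja.
by rewrite scalerBr scalerA mulrC -scalerA -iota_n // -!linearZZ -[a *: p]hn //= gh subrr.
Qed.

Lemma w_projective_Mw_lifts : w_projective iota ->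
  exists ds, GV ds /\ forall j : 'I_(size ds),
    exists h : {linear submod Mw_submodule -> freemod (submod Mw_submodule) R},
      forall y, flift idfun (h y) = ds`_j *: y.
Proof.
move=> wproj; pose L := submod Mw_submodule.
have Ltf : GV_torsionfree L.
  exact: GV_torsionfree_inj val_inj (envelope_GV_torsionfree env Mtf).
pose N := submod (ker_submodule (flift (@idfun L))).
have Ntf : GV_torsionfree N.
  exact: GV_torsionfree_inj val_inj (@freemod_GV_torsionfree R L).
have Nw : w_module N.
  apply: GV_extendable_w_module Ntf _.
  exact: ker_GV_extendable (@freemod_GV_extendable R L) Ltf.
apply: (wproj L (submod_incl _) val_inj (submod_inclP _) _ Ntf Nw).
exact/ker_short_exact/flift_idfun_onto.
Qed.

Lemma GV_scales_Mw_into_M_w_split : w_projective iota ->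
  (exists es, GV es /\
    forall x, Mw iota x -> forall a, ideal_gen es a -> exists m, a *: x = iota m) ->
  w_split M.
Proof.
move=> wproj [es [GVe es_Mw]].
have [ds [GVd lifts]] := w_projective_Mw_lifts wproj.
exists (submod (ker_submodule (flift idfun))), (freemod M R), (submod_incl _),
  (flift idfun).
split; first exact: freemod_projective.
split; first exact/ker_short_exact/flift_idfun_onto.
exists (ideal_prod es ds); split; first exact: GV_prod.
move=> k; have [i [j ->]] := nth_ideal_prod k.
have [h gh] := lifts j.
have [mu iota_mu] : exists mu : submod Mw_submodule -> M,
    forall y, iota (mu y) = es`_i *: val y.
  apply: (ClassicalEpsilon.choice (fun y m => iota m = es`_i *: val y)) => y.
  by have [m em] := es_Mw _ (submod_valP y) _ (ideal_gen_nth i); exists m.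
have [Psi gPsi] :=
  @freemod_projective R _ _ _ (flift idfun) (flift mu) (@flift_idfun_onto R M).
exists (Psi \o h \o Mw_of) => m; apply: env.1.
rewrite /= gPsi flift_comp (eq_flift iota_mu) flift_scale.
rewrite -(flift_comp (submod_incl _) idfun) gh.
by rewrite [RHS]linearZZ -scalerA; congr (_ *: _); rewrite linearZZ.
Qed.

End Mw.

Theorem proposition2p9 (R : comPzRingType) (M E : lmodType R) (iota : {linear M -> E}) :
  injective_envelope iota -> GV_torsionfree M -> w_projective iota ->
  (w_split M <->
   exists ds : seq R, GV ds /\
     forall x : E, Mw iota x -> forall a : R, ideal_gen ds a -> exists m : M, a *: x = iota m).
Proof.
move=> env Mtf wproj; split; first exact: w_split_GV_scales_Mw_into_M.
exact: GV_scales_Mw_into_M_w_split.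
Qed.
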